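(* For every odd $k\ge3$, the map $p\in[0,p_k^\star]\mapsto\varphi^-_{p,k}$ is increasing.
   Context: For odd $k$, $p,x\in[0,1]$: $F_{p,k}(x)=\Pr[\mathrm{Bin}(k,(1-p)x)\ge(k+1)/2]$. $p_k^\star\in[1/9,1/2)$ is the (unique) value such that for $0\le p<p_k^\star$ the equation $F_{p,k}(x)=x$ on $[0,1]$ has exactly three solutions $0<\varphi^-_{p,k}<\varphi^+_{p,k}$; for $p=p_k^\star$ exactly two solutions $0$ and $\varphi_{p,k}$, and one sets $\varphi^-_{p_k^\star,k}=\varphi^+_{p_k^\star,k}=\varphi_{p_k^\star,k}$; for $p>p_k^\star$ only $0$. *)

From Stdlib Require Import Reals Lra Lia.
Open Scope R_scope.

(* F_{p,k}(x) = Pr[Bin(k, (1-p)x) >= (k+1)/2]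
             = sum_{j=(k+1)/2}^{k} C(k,j) q^j (1-q)^(k-j),  q = (1-p) x.
   For odd k, (k+1)/2 = Nat.div2 (S k) = S k / 2. *)
Definition F (p : R) (k : nat) (x : R) : R :=
  let q := (1 - p) * x in
  sum_f (S k / 2)%nat k (fun j => C k j * q ^ j * (1 - q) ^ (k - j)).

Definition is_fixed (p : R) (k : nat) (x : R) : Prop :=
  0 <= x <= 1 /\ F p k x = x.

Definition is_pstar (k : nat) (ps : R) : Prop :=
  1/9 <= ps < 1/2 /\
  (forall p, 0 <= p < ps ->
     exists a b, 0 < a < b /\ b <= 1 /\
       forall x, 0 <= x <= 1 -> (F p k x = x <-> x = 0 \/ x = a \/ x = b)) /\
  (exists c, 0 < c <= 1 /\
       forall x, 0 <= x <= 1 -> (F ps k x = x <-> x = 0 \/ x = c)) /\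
  (forall p, ps < p <= 1 ->
       forall x, 0 <= x <= 1 -> (F p k x = x <-> x = 0)).

(* y = phi^-_{p,k}: the smallest positive solution of F_{p,k}(x) = x on [0,1]
   (for p < p*, the smaller of the two positive solutions; for p = p*, the
   unique positive one). *)
Definition is_phi_minus (p : R) (k : nat) (y : R) : Prop :=
  0 < y /\ is_fixed p k y /\
  forall x, 0 < x -> is_fixed p k x -> y <= x.

(** The majority function [G_k(q) = P[Bin(k,q) >= (k+1)/2]] has derivative
    [k C(k-1,(k-1)/2) (q(1-q))^((k-1)/2)], so it is strictly increasing on [0,1],
    and for [k >= 3] it is [O(q^2)] at [0].  Since [F_{p,k}(x) = G_k((1-p)x)],
    at [y = phi^-_{p2,k}] we get [F_{p1,k}(y) > F_{p2,k}(y) = y] for [p1 < p2],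
    while [F_{p1,k}(x) < x] for small [x > 0]; the intermediate value theorem then
    yields a positive fixed point of [F_{p1,k}] strictly below [y]. *)

From Stdlib Require Import Reals Lra Lia.
From Coquelicot Require Import Hierarchy Derive AutoDerive.
Open Scope R_scope.

Lemma C_pos N j : 0 < C N j.
Proof.
  unfold C. apply Rdiv_lt_0_compat; [apply INR_fact_lt_0|].
  apply Rmult_lt_0_compat; apply INR_fact_lt_0.
Qed.

Lemma C_diag N : C N N = 1.
Proof.
  unfold C. rewrite Nat.sub_diag. simpl.
  pose proof (INR_fact_neq_0 N). field. auto.
Qed.

Lemma C_succ_mul_succ N i : C (S N) (S i) * INR (S i) = INR (S N) * C N i.
Proof.
  unfold C. simpl (S N - S i)%nat. rewrite !fact_simpl, !mult_INR.
  pose proof (INR_fact_neq_0 N). pose proof (INR_fact_neq_0 i).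
  pose proof (INR_fact_neq_0 (N - i)). pose proof (pos_INR i).
  field. rewrite S_INR. repeat split; auto; lra.
Qed.

Lemma C_succ_mul_sub N j : (j <= N)%nat -> C (S N) j * INR (S N - j) = INR (S N) * C N j.
Proof.
  intros Hj. unfold C. replace (S N - j)%nat with (S (N - j)) by lia.
  rewrite !fact_simpl, !mult_INR.
  pose proof (INR_fact_neq_0 N). pose proof (INR_fact_neq_0 j).
  pose proof (INR_fact_neq_0 (N - j)). pose proof (pos_INR (N - j)).
  field. rewrite S_INR. repeat split; auto; lra.
Qed.

Lemma pow_le_one x n : 0 <= x <= 1 -> x ^ n <= 1.
Proof. intros Hx. rewrite <- (pow1 n). apply pow_incr. exact Hx. Qed.

Definition bernstein (N j : nat) (q : R) : R := C N j * q ^ j * (1 - q) ^ (N - j).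

Definition majority (k : nat) (q : R) : R := sum_f (S k / 2) k (fun j => bernstein k j q).

Lemma F_majority p k x : F p k x = majority k ((1 - p) * x).
Proof. reflexivity. Qed.

Lemma bernstein_pos N j q : 0 < q < 1 -> 0 < bernstein N j q.
Proof.
  intros Hq. unfold bernstein.
  apply Rmult_lt_0_compat; [apply Rmult_lt_0_compat|]; [apply C_pos | |]; apply pow_lt; lra.
Qed.

Lemma bernstein_le_sq N j q : (2 <= j)%nat -> 0 <= q <= 1 -> bernstein N j q <= C N j * q ^ 2.
Proof.
  intros Hj Hq. unfold bernstein.
  replace j with (2 + (j - 2))%nat at 2 by lia. rewrite pow_add.
  set (a := q ^ (j - 2)). set (b := (1 - q) ^ (N - j)).
  assert (a <= 1) by (apply pow_le_one; lra).
  assert (b <= 1) by (apply pow_le_one; lra).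
  assert (0 <= a) by (apply pow_le; lra).
  assert (0 <= b) by (apply pow_le; lra).
  assert (0 <= q ^ 2) by (apply pow_le; lra).
  pose proof (C_pos N j).
  assert (a * b <= 1) by nra.
  assert (C N j * q ^ 2 * (1 - a * b) >= 0) by (apply Rle_ge, Rmult_le_pos; nra).
  nra.
Qed.

Lemma is_derive_bernstein N j q :
  is_derive (bernstein N j) q
    (C N j * (INR j * q ^ pred j * (1 - q) ^ (N - j)
              - INR (N - j) * q ^ j * (1 - q) ^ pred (N - j))).
Proof.
  unfold bernstein. auto_derive; [exact I|].
  replace (1 + - q) with (1 - q) by ring. ring.
Qed.

Lemma is_derive_bernstein_succ N i q : (i < N)%nat ->
  is_derive (bernstein (S N) (S i)) q (INR (S N) * (bernstein N i q - bernstein N (S i) q)).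
Proof.
  intros Hi.
  replace (INR (S N) * (bernstein N i q - bernstein N (S i) q))
    with (C (S N) (S i) * (INR (S i) * q ^ pred (S i) * (1 - q) ^ (S N - S i)
                           - INR (S N - S i) * q ^ S i * (1 - q) ^ pred (S N - S i)));
    [apply is_derive_bernstein|].
  unfold bernstein. replace (pred (S N - S i)) with (N - S i)%nat by lia. cbn [pred].
  replace (N - i)%nat with (S N - S i)%nat by lia.
  transitivity ((C (S N) (S i) * INR (S i)) * q ^ i * (1 - q) ^ (S N - S i)
                - (C (S N) (S i) * INR (S N - S i)) * q ^ S i * (1 - q) ^ (N - S i)); [ring|].
  rewrite C_succ_mul_succ, C_succ_mul_sub by lia. ring.
Qed.

Lemma is_derive_bernstein_diag N q :
  is_derive (bernstein (S N) (S N)) q (INR (S N) * bernstein N N q).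
Proof.
  replace (INR (S N) * bernstein N N q)
    with (C (S N) (S N) * (INR (S N) * q ^ pred (S N) * (1 - q) ^ (S N - S N)
                           - INR (S N - S N) * q ^ S N * (1 - q) ^ pred (S N - S N)));
    [apply is_derive_bernstein|].
  unfold bernstein. rewrite !Nat.sub_diag, !C_diag. simpl. ring.
Qed.

Lemma sum_f_diag n f : sum_f n n f = f n.
Proof. unfold sum_f. rewrite Nat.sub_diag. reflexivity. Qed.

Lemma sum_f_first m n f : (m < n)%nat -> sum_f m n f = f m + sum_f (S m) n f.
Proof.
  intros Hmn. unfold sum_f. rewrite decomp_sum by lia.
  replace (pred (n - m)) with (n - S m)%nat by lia.
  f_equal. apply sum_eq. intros t _. f_equal. lia.
Qed.

(* The upper tails of [Bin(N+1,q)] telescope under differentiation. *)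
Lemma is_derive_binomial_tail N m q : (m <= N)%nat ->
  is_derive (fun x => sum_f (S m) (S N) (fun j => bernstein (S N) j x)) q
    (INR (S N) * bernstein N m q).
Proof.
  intros Hm. remember (N - m)%nat as d eqn:Hd.
  induction d as [|d IH] in m, Hm, Hd |- *.
  - replace m with N by lia.
    apply (is_derive_ext (bernstein (S N) (S N))); [intro x; symmetry; apply sum_f_diag|].
    apply is_derive_bernstein_diag.
  - apply (is_derive_ext
             (fun x => bernstein (S N) (S m) x + sum_f (S (S m)) (S N) (fun j => bernstein (S N) j x)));
      [intro x; symmetry; apply sum_f_first; lia|].
    replace (INR (S N) * bernstein N m q)
      with (INR (S N) * (bernstein N m q - bernstein N (S m) q) + INR (S N) * bernstein N (S m) q)
      by ring.
    apply (is_derive_plus (bernstein (S N) (S m))).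
    + apply is_derive_bernstein_succ. lia.
    + apply IH; lia.
Qed.

Lemma half_succ_odd n : (S (S (2 * n)) / 2)%nat = S n.
Proof. symmetry. apply (Nat.div_unique _ _ _ 0); lia. Qed.

Lemma is_derive_majority_odd n q :
  is_derive (majority (S (2 * n))) q (INR (S (2 * n)) * bernstein (2 * n) n q).
Proof.
  unfold majority. rewrite half_succ_odd.
  apply is_derive_binomial_tail. lia.
Qed.

Lemma majority_odd_increasing n r q : 0 <= r -> r < q -> q <= 1 ->
  majority (S (2 * n)) r < majority (S (2 * n)) q.
Proof.
  intros Hr Hrq Hq.
  destruct (MVT_cor2 (majority (S (2 * n)))
              (fun c => INR (S (2 * n)) * bernstein (2 * n) n c) r q Hrq)
    as [c [Hmvt Hc]].
  { intros c _. apply is_derive_Reals, is_derive_majority_odd. }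
  assert (0 < INR (S (2 * n)) * bernstein (2 * n) n c)
    by (apply Rmult_lt_0_compat; [apply lt_0_INR; lia | apply bernstein_pos; lra]).
  nra.
Qed.

Lemma continuity_F_odd p n : continuity (F p (S (2 * n))).
Proof.
  intro x. apply derivable_continuous_pt, ex_derive_Reals_0.
  eexists. apply (is_derive_comp (majority (S (2 * n))) (fun x => (1 - p) * x)).
  - apply is_derive_majority_odd.
  - auto_derive; [exact I | reflexivity].
Qed.

Lemma binomial_tail_le_sq N m q : (2 <= m)%nat -> 0 <= q <= 1 ->
  sum_f m N (fun j => bernstein N j q) <= sum_f m N (C N) * q ^ 2.
Proof.
  intros Hm Hq. unfold sum_f. rewrite Rmult_comm, scal_sum.
  apply sum_Rle. intros t _.
  apply bernstein_le_sq; [lia | exact Hq].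
Qed.

Lemma F_le_sq p k : 0 <= p <= 1 -> (3 <= k)%nat ->
  exists M, 0 <= M /\ forall x, 0 <= x <= 1 -> F p k x <= M * x ^ 2.
Proof.
  intros Hp Hk. exists (sum_f (S k / 2) k (C k)). split.
  - apply cond_pos_sum. intros t. left. apply C_pos.
  - intros x Hx. rewrite F_majority. unfold majority.
    eapply Rle_trans; [apply binomial_tail_le_sq|].
    + apply (Nat.Div0.div_le_mono 4 (S k) 2). lia.
    + split; nra.
    + apply Rmult_le_compat_l; [apply cond_pos_sum; intros t; left; apply C_pos|].
      simpl. nra.
Qed.

Lemma fixed_point_below (g : R -> R) (M y : R) :
  continuity g -> 0 <= M -> (forall x, 0 <= x <= 1 -> g x <= M * x ^ 2) ->
  0 < y <= 1 -> y < g y -> exists z, 0 < z < y /\ g z = z.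
Proof.
  intros Hg HM Hquad Hy Hgy.
  set (eps := y / (2 * (M + 1))).
  assert (Heps : eps * (2 * (M + 1)) = y) by (unfold eps; field; lra).
  assert (0 < eps) by (unfold eps; apply Rdiv_lt_0_compat; lra).
  assert (eps <= y / 2) by nra.
  assert (Hbelow : g eps - eps < 0).
  { pose proof (Hquad eps ltac:(lra)). simpl in *. nra. }
  destruct (IVT (fun x => g x - x) eps y) as [z [Hz Hgz]]; [| lra | exact Hbelow | lra |].
  - intro x. apply continuity_pt_minus; [apply Hg | apply derivable_continuous_pt, derivable_pt_id].
  - exists z. split; [| lra].
    split; [lra|]. destruct (Req_dec z y) as [->|]; lra.
Qed.

Theorem lemmaA7 :
  forall (k : nat), Nat.Odd k -> (3 <= k)%nat ->
  forall ps : R, is_pstar k ps ->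
  forall (p1 p2 y1 y2 : R),
    0 <= p1 -> p1 < p2 -> p2 <= ps ->
    is_phi_minus p1 k y1 -> is_phi_minus p2 k y2 ->
    y1 < y2.
Proof.
  intros k [n ->] Hk ps [[_ Hps] _] p1 p2 y1 y2 Hp1 Hp12 Hp2
    [_ [_ Hmin1]] [Hy2 [[[_ Hy2le] Hfix2] _]].
  replace (2 * n + 1)%nat with (S (2 * n)) in * by lia.
  assert (Habove : y2 < F p1 (S (2 * n)) y2).
  { rewrite <- Hfix2 at 1. rewrite !F_majority.
    apply majority_odd_increasing; nra. }
  destruct (F_le_sq p1 (S (2 * n))) as [M [HM Hquad]]; [lra | exact Hk |].
  destruct (fixed_point_below _ M y2 (continuity_F_odd p1 n) HM Hquad (conj Hy2 Hy2le) Habove)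
    as [z [Hz Hfz]].
  assert (y1 <= z) by (apply Hmin1; [lra | split; [lra | exact Hfz]]).
  lra.
Qed.
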